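(* Consider an instance of rooted $k$-robust Steiner tree on an undirected graph $G=(V,E)$ with edge costs $c$, root $r$ and terminal set $U\subseteq V$, a threshold $T\ge0$, and a constant $\beta>2$. Let $S$ be constructed by starting with $S=\{r\}$ and, while some terminal $v\in U$ has $d(v,S)>\beta\frac{T}{k}$, adding such a $v$ to $S$; let $\Phi_T$ be a minimum spanning tree on $S$ (with respect to shortest-path distances, realized by the corresponding shortest paths). Let $\Phi^*$ and $T^*$ denote the first-stage cost and second-stage cost of an optimal solution of the $k$-robust instance. If $T\ge T^*$ then $c(\Phi_T)\le\frac{2\beta}{\beta-2}\cdot\Phi^*+2\cdot T^*$.
   Context: $d$ is the shortest-path distance in $G$ and $d(v,S)=\min_{w\in S}d(v,w)$. Rooted $k$-robust Steiner tree: inflation $\lambda\ge1$, integer $k\ge1$; a feasible solution is a first-stage edge set $E_0$ and, for each $D\subseteq U$ with $|D|=k$, an edge set $E_D$ such that $E_0\cup E_D$ connects every terminal of $D$ to $r$; its cost is $c(E_0)+\lambda\max_Dc(E_D)$, with first-stage cost $c(E_0)$ and second-stage cost $\max_Dc(E_D)$. *)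

From HB Require Import structures.
From mathcomp Require Import all_boot all_order all_algebra.
From mathcomp Require Import boolp classical_sets reals.
Set Implicit Arguments. Unset Strict Implicit. Unset Printing Implicit Defensive.
Import Order.TTheory GRing.Theory Num.Theory.
Local Open Scope ring_scope.

Section Steiner.
Variables (R : realType) (V : finType).
(* The graph G: edges are 2-element vertex sets; c gives edge costs. *)
Variables (E : {set {set V}}) (c : {set V} -> R).

Definition edge_cost (F : {set {set V}}) : R := \sum_(e in F) c e.

Definition connects (F : {set {set V}}) (x y : V) : bool :=
  connect (fun a b => [set a; b] \in F) x y.

Definition walk_cost (u : V) (p : seq V) : R :=
  \sum_(ab <- zip (u :: p) p) c [set ab.1; ab.2].

Definition dist (u v : V) : R :=
  inf (fun x : R => exists p : seq V,
         [/\ path (fun a b => [set a; b] \in E) u p, last u p = v & x = walk_cost u p]).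

Definition distS (v : V) (S : {set V}) : R :=
  inf [set dist v w | w in [set w | w \in S]]%classic.

Variables (r : V) (U : {set V}) (lambda : R) (k : nat).

Definition scenarios : {set {set V}} := [set D : {set V} | (D \subset U) && (#|D| == k)].

Definition feasible (E0 : {set {set V}}) (ED : {set V} -> {set {set V}}) : Prop :=
  E0 \subset E /\
  forall D, D \in scenarios ->
    ED D \subset E /\ forall v, v \in D -> connects (E0 :|: ED D) v r.

Definition second_stage (ED : {set V} -> {set {set V}}) : R :=
  \big[Num.max/0]_(D in scenarios) edge_cost (ED D).

Definition robust_cost E0 ED : R := edge_cost E0 + lambda * second_stage ED.

Definition optimal E0 ED : Prop :=
  feasible E0 ED /\
  forall E0' ED', feasible E0' ED' -> robust_cost E0 ED <= robust_cost E0' ED'.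

(* s = [v_1; ...; v_m] is a possible run of the greedy construction of S with
   threshold beta*T/k, S = {r, v_1, ..., v_m}: each added v_i is a terminal far from
   the current set, and at termination no terminal is far from S. *)
Definition greedy_run (beta T : R) (s : seq V) : Prop :=
  (forall i, (i < size s)%N ->
     nth r s i \in U /\
     beta * T / k%:R < distS (nth r s i) (r |: [set x in take i s])) /\
  (forall v, v \in U -> distS v (r |: [set x in s]) <= beta * T / k%:R).

Definition greedy_set (s : seq V) : {set V} := r |: [set x in s].

(* spanning trees on S in the metric closure (edges stored as ordered pairs) *)
Definition mtree_weight (F : {set V * V}) : R := \sum_(p in F) dist p.1 p.2.

Definition spanning_tree_on (S : {set V}) (F : {set V * V}) : Prop :=
  [/\ forall p, p \in F -> [/\ p.1 \in S, p.2 \in S & p.1 != p.2],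
      #|F| = (#|S|).-1
    & forall x y, x \in S -> y \in S ->
        connect (fun a b => ((a, b) \in F) || ((b, a) \in F)) x y].

Definition mst_on (S : {set V}) (F : {set V * V}) : Prop :=
  spanning_tree_on S F /\
  forall F', spanning_tree_on S F' -> mtree_weight F <= mtree_weight F'.

End Steiner.

From HB Require Import structures.
From mathcomp Require Import all_boot all_order all_algebra.
From mathcomp Require Import boolp classical_sets reals.
From mathcomp Require Import ring lra zify.
Import Order.TTheory GRing.Theory Num.Theory.
Local Open Scope ring_scope.

(** Every greedy point [v] lies at distance more than [beta T / k] from the root and from all
    other greedy points, so the open balls of radius [rho = beta T / (2 k)] around them are
    disjoint.  Charging each edge [ab] to a center [v] by [min (c ab) (load of a + load of b)],
    where a vertex [y] of the ball contributes [rho - d v y], every path from [v] to the root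
    receives charge at least [rho], while every edge receives total charge at most its cost.
    Splitting the greedy points into groups of [k], each group is a scenario: its second-stage
    edges absorb at most [T*] of its charge [k rho], so the first stage [Phi*] pays at least
    [beta T / 2 - T*] per group.  On the other hand the first-stage edges together with the
    second-stage edges of the groups connect all greedy points to the root at cost
    [Phi* + (#groups + 1) T*], and doubling and shortcutting this connector bounds the minimum
    spanning tree on [S] by twice that cost.  Eliminating [#groups] gives the bound. *)

Set Implicit Arguments.
Unset Strict Implicit.
Unset Printing Implicit Defensive.

Section NonnegSums.
Variables (R : numDomainType) (T : finType).
Implicit Types (A B : {set T}) (h : T -> R).

Lemma ler_sum_subset (A B : {pred T}) h : A \subset B ->
  (forall x, x \in B -> 0 <= h x) -> \sum_(x in A) h x <= \sum_(x in B) h x.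
Proof.
move=> /fintype.subsetP sAB h0; rewrite [leLHS]big_mkcond [leRHS]big_mkcond /=.
apply: ler_sum => x _; case: ifP => [/sAB -> //|_].
by case: ifP => // /h0.
Qed.

Lemma ler_sum_setU A B h : (forall x, x \in A :|: B -> 0 <= h x) ->
  \sum_(x in A :|: B) h x <= \sum_(x in A) h x + \sum_(x in B) h x.
Proof.
move=> h0; rewrite (big_setID A) /= finset.setUK finset.setDUl finset.setDv finset.set0U.
rewrite lerD2l; apply: ler_sum_subset; first exact: finset.subsetDl.
by move=> x xB; apply: h0; rewrite inE xB orbT.
Qed.

Lemma ler_sum_single A h x0 : 0 <= h x0 -> (forall x, x \in A -> x != x0 -> h x = 0) ->
  \sum_(x in A) h x <= h x0.
Proof.
move=> h0 hz; have [xA|xA] := boolP (x0 \in A).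
  by rewrite (bigD1 x0) //= big1 ?addr0 // => x /andP[]; exact: hz.
by rewrite big1 // => x x_A; apply: hz => //; apply: contraNneq xA => <-.
Qed.

Lemma big_uniq_set (t : seq T) h : uniq t -> \sum_(x <- t) h x = \sum_(x in [set y in t]) h x.
Proof. by move=> ut; rewrite (big_uniq _ ut); apply: eq_bigl => x; rewrite inE. Qed.

End NonnegSums.

Section GraphMetric.
Variables (R : realType) (V : finType) (E : {set {set V}}) (c : {set V} -> R).
Hypothesis c_ge0 : forall e, e \in E -> 0 <= c e.
Implicit Types (H : {set {set V}}) (u v w x y : V) (p q : seq V).

Definition edge_rel (H : {set {set V}}) : rel V := fun a b => [set a; b] \in H.

Local Notation d := (dist E c).
Local Notation walk := (path (edge_rel E)).

Lemma edge_rel_sym H : symmetric (edge_rel H).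
Proof. by move=> a b; rewrite /edge_rel finset.setUC. Qed.

Lemma connects_refl H x : connects H x x.
Proof. exact: connect0. Qed.

Lemma connects_sym H x y : connects H x y = connects H y x.
Proof. exact: (sym_connect_sym (edge_rel_sym H)). Qed.

Lemma connects_trans H x y z : connects H x y -> connects H y z -> connects H x z.
Proof. exact: connect_trans. Qed.

Lemma connects_edge H a b : [set a; b] \in H -> connects H a b.
Proof. exact: connect1. Qed.

Lemma connects_subset H1 H2 x y : H1 \subset H2 -> connects H1 x y -> connects H2 x y.
Proof.
move=> sH; apply: connect_sub => a b ab.
by apply: connect1; rewrite /edge_rel (fintype.subsetP sH).
Qed.

Lemma sub_edge_rel_path H1 H2 x p : H1 \subset H2 ->
  path (edge_rel H1) x p -> path (edge_rel H2) x p.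
Proof. by move=> sH; apply: sub_path => a b; rewrite /edge_rel => /(fintype.subsetP sH). Qed.

Lemma connects_path H x p y : path (edge_rel H) x p -> y \in x :: p -> connects H x y.
Proof.
elim: p x => [|z p IH] x /=; first by move=> _; rewrite inE => /eqP ->; exact: connect0.
case/andP=> xz hp; rewrite inE => /orP[/eqP -> | /(IH _ hp)]; first exact: connect0.
exact/connect_trans/connect1.
Qed.

Lemma edge_cost_ge0 H : H \subset E -> 0 <= edge_cost c H.
Proof. by move=> sH; apply: sumr_ge0 => e eH; apply: c_ge0; rewrite (fintype.subsetP sH). Qed.

Lemma walk_cost_nil u : walk_cost c u [::] = 0.
Proof. by rewrite /walk_cost big_nil. Qed.

Lemma walk_cost_cons u y p : walk_cost c u (y :: p) = c [set u; y] + walk_cost c y p.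
Proof. by rewrite /walk_cost /= big_cons. Qed.

Lemma walk_cost_cat u p q :
  walk_cost c u (p ++ q) = walk_cost c u p + walk_cost c (last u p) q.
Proof.
elim: p u => [|y p IH] u /=; first by rewrite walk_cost_nil add0r.
by rewrite !walk_cost_cons IH addrA.
Qed.

Lemma walk_cost_ge0 u p : walk u p -> 0 <= walk_cost c u p.
Proof.
elim: p u => [|y p IH] u /=; first by rewrite walk_cost_nil.
by case/andP=> uy hp; rewrite walk_cost_cons addr_ge0 ?c_ge0 ?IH.
Qed.

Lemma walk_rev u p : walk u p -> exists q,
  [/\ walk (last u p) q, last (last u p) q = u & walk_cost c (last u p) q = walk_cost c u p].
Proof.
elim: p u => [|y p IH] u /=; first by exists [::]; rewrite walk_cost_nil.
case/andP=> uy /IH[q [hq lq wq]]; exists (q ++ [:: u]); split.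
- by rewrite cat_path hq lq /= andbT edge_rel_sym.
- by rewrite last_cat.
- by rewrite walk_cost_cat lq wq !walk_cost_cons walk_cost_nil addr0 finset.setUC addrC.
Qed.

Lemma dist_le_walk u p : walk u p -> d u (last u p) <= walk_cost c u p.
Proof.
move=> hp; apply: ge_inf; last by exists p.
by exists 0 => _ [q [hq _ ->]]; exact: walk_cost_ge0.
Qed.

Lemma dist_ge_walks u v (m : R) : connects E u v ->
  (forall p, walk u p -> last u p = v -> m <= walk_cost c u p) -> m <= d u v.
Proof.
move=> /connectP[p0 h0 l0] lb; apply: lb_le_inf; first by exists (walk_cost c u p0), p0.
by move=> _ [p [hp lp ->]]; exact: lb.
Qed.

(* [inf] of the empty set is [0], so disconnected vertices are at distance [0]: this is why the
   triangle inequality below needs connectivity hypotheses. *)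
Lemma dist_disconnected u v : ~~ connects E u v -> d u v = 0.
Proof.
move=> nuv; rewrite /dist inf_out // => -[[_ [p [hp lp _]]] _].
by move/negP: nuv; apply; apply/connectP; exists p.
Qed.

Lemma dist_ge0 u v : 0 <= d u v.
Proof.
have [cuv|nuv] := boolP (connects E u v); last by rewrite dist_disconnected.
by apply: dist_ge_walks => // p hp _; exact: walk_cost_ge0.
Qed.

Lemma dist_xx u : d u u = 0.
Proof.
by apply/le_anti; rewrite dist_ge0 andbT (le_trans (@dist_le_walk u [::] isT)) ?walk_cost_nil.
Qed.

Lemma dist_edge a b : [set a; b] \in E -> d a b <= c [set a; b].
Proof.
move=> ab; have := @dist_le_walk a [:: b].
by rewrite /= walk_cost_cons walk_cost_nil addr0; apply; rewrite /edge_rel ab.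
Qed.

Lemma dist_sym u v : d u v = d v u.
Proof.
wlog suff: u v / d u v <= d v u by move=> h; apply/le_anti; rewrite !h.
have [cvu|nvu] := boolP (connects E v u); last first.
  by rewrite !dist_disconnected // connects_sym.
apply: dist_ge_walks => // p hp lp; have [q [hq lq <-]] := walk_rev hp.
by move: hq lq; rewrite lp => hq <-; exact: dist_le_walk.
Qed.

Lemma dist_triangle u v w : connects E u v -> connects E v w -> d u w <= d u v + d v w.
Proof.
move=> cuv cvw; rewrite addrC -lerBlDr; apply: dist_ge_walks => // q hq lq.
rewrite lerBlDr addrC -lerBlDr; apply: dist_ge_walks => // p hp lp.
rewrite lerBlDr; have := @dist_le_walk u (p ++ q).
by rewrite cat_path hp lp hq last_cat lp lq walk_cost_cat lp; apply.
Qed.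

Lemma distS_le v (S : {set V}) w : w \in S -> distS E c v S <= d v w.
Proof.
move=> wS; apply: ge_inf; last by exists w; rewrite ?inE.
by exists 0 => _ [w' _ <-]; exact: dist_ge0.
Qed.

End GraphMetric.

Lemma eq_set2 (T : finType) (a b x y : T) : [set a; b] = [set x; y] ->
  a = b \/ (a = x /\ b = y) \/ (a = y /\ b = x).
Proof.
move=> h.
have ha : a \in [set x; y] by rewrite -h set21.
have hb : b \in [set x; y] by rewrite -h set22.
by case/set2P: ha => ->; case/set2P: hb => ->; tauto.
Qed.

Section Connectivity.
Variable V : finType.
Implicit Types (H : {set {set V}}) (a b x y z : V).

Lemma connects_setD1_edge H a b y : connects H a y ->
  connects (H :\ [set a; b]) a y || connects (H :\ [set a; b]) b y.
Proof.
set H' := H :\ _.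
have step z z' : edge_rel H z z' -> connects H' a z || connects H' b z ->
    connects H' a z' || connects H' b z'.
  move=> zz'; have [/eq_set2|ne] := eqVneq [set z; z'] [set a; b].
    by case=> [<- //|[[_ ->]|[_ ->]]] _; rewrite connects_refl ?orbT.
  have e : connects H' z z' by apply: connect1; rewrite /edge_rel !inE ne.
  by case/orP=> h; apply/orP; [left|right]; exact: connect_trans h e.
suff: forall p z, path (edge_rel H) z p -> connects H' a z || connects H' b z ->
    connects H' a (last z p) || connects H' b (last z p).
  by move=> gen /connectP[p hp ->]; apply: gen hp _; rewrite connects_refl.
by elim=> // z' p IH z /= /andP[zz' hp] /(step _ _ zz'); exact: IH.
Qed.

Lemma connects_restrict H H' x y :
  (forall z z', connects H x z -> edge_rel H z z' -> edge_rel H' z z') ->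
  connects H x y -> connects H' x y.
Proof.
move=> sub /connectP[p hp ->]; apply/connectP; exists p => //.
suff: forall z, connects H x z -> path (edge_rel H) z p -> path (edge_rel H') z p.
  by apply; first exact: connect0.
elim: p {hp} => //= z' p IH z xz /andP[zz' hp].
by rewrite sub // IH //; apply: connects_trans xz _; apply: connect1.
Qed.

Definition component_edges H x := [set f in H | [exists z in f, connects H x z]].

Lemma connects_component_edges H x y : connects H x y -> connects (component_edges H x) x y.
Proof.
apply: connects_restrict => z z' xz; rewrite /edge_rel => zz'.
by rewrite inE zz'; apply/existsP; exists z; rewrite set21.
Qed.

Lemma connects_off_component H x b y : ~~ connects H x b -> connects H b y ->
  connects (H :\: component_edges H x) b y.
Proof.
move=> nxb; apply: connects_restrict => z z' bz; rewrite /edge_rel => zz'.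
rewrite !inE zz' andbT /=; apply/negP => /existsP[w /andP[/set2P[]-> xw]].
  by move/negP: nxb; apply; apply: connects_trans xw _; rewrite connects_sym.
move/negP: nxb; apply; apply: connects_trans xw _; rewrite connects_sym.
by apply: connects_trans bz _; exact: connect1.
Qed.

End Connectivity.

Section DoubleTree.
Variables (R : realType) (V : finType) (E : {set {set V}}) (c : {set V} -> R).
Hypothesis E2 : forall e, e \in E -> #|e| = 2%N.
Hypothesis c_ge0 : forall e, e \in E -> 0 <= c e.
Implicit Types (H : {set {set V}}) (x y : V).

Lemma edge_at e x : e \in E -> x \in e -> exists b, e = [set x; b].
Proof.
move=> /E2/eqP/cards2P[a [b [_ ->]]] /set2P[]->; first by exists b.
by exists a; rewrite finset.setUC.
Qed.

Lemma closed_walk_join H H' x b s1 s2 : H' \subset H -> [set x; b] \in H ->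
  path (edge_rel H') x s1 -> last x s1 = x -> path (edge_rel H') b s2 -> last b s2 = b ->
  let s := s1 ++ b :: s2 ++ [:: x] in
  [/\ path (edge_rel H) x s, last x s = x &
      walk_cost c x s = walk_cost c x s1 + walk_cost c b s2 + 2 * c [set x; b]].
Proof.
move=> sH' xb hs1 ls1 hs2 ls2; split.
- rewrite cat_path /= cat_path ls1 ls2 /= !(sub_edge_rel_path sH') //.
  by rewrite /edge_rel [[set b; x]]finset.setUC xb.
- by rewrite last_cat /= last_cat.
- rewrite walk_cost_cat ls1 walk_cost_cons walk_cost_cat ls2 walk_cost_cons walk_cost_nil.
  by rewrite [[set b; x]]finset.setUC mulr2n mulrDl !mul1r; ring.
Qed.

(* An Euler tour of the doubled edges: an edge [xb] whose removal keeps [b] connected to [x] is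
   dropped; otherwise it is walked in both directions, between the tours of its two sides. *)
Lemma closed_walk_double_cover H x : H \subset E -> exists s,
  [/\ path (edge_rel H) x s, last x s = x, walk_cost c x s <= 2 * edge_cost c H &
      forall y, connects H x y -> y \in x :: s].
Proof.
have [n] := ubnP #|H|; elim: n H x => // n IH H x Hn sH.
case: (pickP [pred e in H | x \in e]) => [e /andP[eH xe] | noe]; last first.
  exists [::]; split => //; first by rewrite walk_cost_nil mulr_ge0 // (edge_cost_ge0 c_ge0 sH).
  move=> y /connectP[[|z p] /= hp ->]; rewrite ?mem_head //.
  by case/andP: hp => xz _; have := noe [set x; z]; rewrite /= xz set21.
have [b eE] := edge_at (fintype.subsetP sH _ eH) xe; subst e.
set H' := H :\ [set x; b].
have sH'H : H' \subset H := subD1set H _.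
have H'lt : (#|H'| < n)%N by move: Hn; rewrite (cardsD1 [set x; b] H) eH.
have costH : edge_cost c H = c [set x; b] + edge_cost c H'.
  by rewrite /edge_cost (big_setD1 _ eH).
have cxb := c_ge0 (fintype.subsetP sH _ eH).
have [xb|nxb] := boolP (connects H' x b).
  have [s [hs ls ws cs]] := IH H' x H'lt (fintype.subset_trans sH'H sH).
  exists s; split => //; [exact: sub_edge_rel_path sH'H hs | rewrite costH; lra |].
  move=> y /(connects_setD1_edge b) /orP[hy|hy]; apply: cs => //.
  exact: connects_trans xb hy.
pose H1 := component_edges H' x; pose H2 := H' :\: H1.
have sH1 : H1 \subset H' by apply/fintype.subsetP => f; rewrite inE => /andP[].
have sH2 : H2 \subset H' := finset.subsetDl _ _.
have costH' : edge_cost c H' = edge_cost c H1 + edge_cost c H2.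
  by rewrite /edge_cost (big_setID H1) (finset.setIidPr sH1).
have [s1 [hs1 ls1 ws1 cs1]] := IH H1 x (leq_ltn_trans (subset_leq_card sH1) H'lt)
  (fintype.subset_trans sH1 (fintype.subset_trans sH'H sH)).
have [s2 [hs2 ls2 ws2 cs2]] := IH H2 b (leq_ltn_trans (subset_leq_card sH2) H'lt)
  (fintype.subset_trans sH2 (fintype.subset_trans sH'H sH)).
have [hs ls ws] := closed_walk_join sH'H eH (sub_edge_rel_path sH1 hs1) ls1
  (sub_edge_rel_path sH2 hs2) ls2.
exists (s1 ++ b :: s2 ++ [:: x]); split => //; first by rewrite ws costH costH'; lra.
move=> y /(connects_setD1_edge b) /orP[] hy; rewrite inE mem_cat.
  by have := cs1 _ (connects_component_edges hy); rewrite inE => /orP[->|->]; rewrite ?orbT.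
have := cs2 _ (connects_off_component nxb hy).
by rewrite !inE mem_cat inE => /orP[->|->]; rewrite ?orbT.
Qed.

Local Notation d := (dist E c).

Definition metric_walk_cost x (s : seq V) : R := \sum_(ab <- zip (x :: s) s) d ab.1 ab.2.

Lemma metric_walk_cost_nil x : metric_walk_cost x [::] = 0.
Proof. by rewrite /metric_walk_cost big_nil. Qed.

Lemma metric_walk_cost_cons x y s : metric_walk_cost x (y :: s) = d x y + metric_walk_cost y s.
Proof. by rewrite /metric_walk_cost /= big_cons. Qed.

(* Shortcutting: by the triangle inequality, dropping vertices never increases the cost. *)
Lemma metric_walk_cost_subseq x u w : path (edge_rel E) x w -> subseq u w ->
  metric_walk_cost x u <= walk_cost c x w.
Proof.
elim: w x u => [|y w IH] x u.
  by move=> _; rewrite subseq0 => /eqP ->; rewrite metric_walk_cost_nil walk_cost_nil.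
case/andP=> xy hw; rewrite walk_cost_cons; case: u => [|z u] /=.
  by rewrite metric_walk_cost_nil addr_ge0 ?c_ge0 ?(walk_cost_ge0 c_ge0 hw).
have cxy := dist_edge c_ge0 xy; case: eqP => [-> sub|_ sub].
  by rewrite metric_walk_cost_cons; apply: lerD => //; exact: IH.
have := IH y _ hw sub; rewrite !metric_walk_cost_cons.
have yz : connects E y z by apply: connects_path hw _; rewrite inE (mem_subseq sub) ?orbT ?mem_head.
have := dist_triangle c_ge0 (connects_edge xy) yz; lra.
Qed.

Definition path_tree x (u : seq V) : {set V * V} := [set p | p \in zip (x :: u) u].

Lemma mem_zip_behead (w : seq V) a b : uniq w -> (a, b) \in zip w (behead w) ->
  [/\ a \in w, b \in w & a != b].
Proof.
elim: w => [|x [|y t] IH] //= /andP[xn un]; rewrite inE => /orP[/eqP[-> ->]|h].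
  split; rewrite ?mem_head ?inE ?eqxx ?orbT //.
  by apply: contraNneq xn => ->; rewrite mem_head.
by have [ha hb ab] := IH un h; split; rewrite // inE ?ha ?hb orbT.
Qed.

Lemma mtree_weight_path_tree x u : uniq (x :: u) ->
  mtree_weight E c (path_tree x u) = metric_walk_cost x u.
Proof.
move=> un; rewrite /mtree_weight /metric_walk_cost (big_uniq _ (zip_uniql _ un)).
by apply: eq_bigl => p; rewrite inE.
Qed.

Lemma path_tree_spanning (S : {set V}) x u : uniq (x :: u) -> S =i x :: u ->
  spanning_tree_on S (path_tree x u).
Proof.
move=> un hS; split.
- move=> [a b]; rewrite inE /= => /(mem_zip_behead un)[ha hb ab].
  by rewrite !hS.
- rewrite cardsE (card_uniqP (zip_uniql _ un)) size_zip /= (minn_idPr (leqnSn _)).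
  by rewrite (eq_card hS) (card_uniqP un).
pose Q a b := ((a, b) \in path_tree x u) || ((b, a) \in path_tree x u).
have Qsym : symmetric Q by move=> a b; rewrite /Q orbC.
have Qpath t x' : {subset zip (x' :: t) t <= zip (x :: u) u} ->
    forall y, y \in x' :: t -> connect Q x' y.
  elim: t x' => [|z t IH] x' sub y; first by rewrite inE => /eqP ->; exact: connect0.
  rewrite inE => /orP[/eqP -> | hy]; first exact: connect0.
  apply: (@connect_trans _ _ z x' y); first by apply: connect1; rewrite /Q inE sub ?mem_head.
  by apply: IH hy => p hp; apply: sub; rewrite /= inE hp orbT.
move=> y z; rewrite !hS => /(Qpath u x (fun p h => h)) xy /(Qpath u x (fun p h => h)) xz.
by apply: connect_trans _ xz; rewrite (sym_connect_sym Qsym).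
Qed.

Lemma mst_le_twice_connector H (S : {set V}) x (F : {set V * V}) :
  H \subset E -> x \in S -> (forall y, y \in S -> connects H x y) ->
  mst_on E c S F -> mtree_weight E c F <= 2 * edge_cost c H.
Proof.
move=> sH xS cS [_ mst].
have [s [hs _ ws cover]] := closed_walk_double_cover x sH.
pose u := undup [seq y <- s | (y \in S) && (y != x)].
have un : uniq (x :: u) by rewrite /= undup_uniq andbT mem_undup mem_filter eqxx andbF.
have hS : S =i x :: u.
  move=> y; rewrite inE mem_undup mem_filter; case: (eqVneq y x) => [->|yx] //=.
  case yS: (y \in S) => //=; symmetry.
  by have := cover y (cS y yS); rewrite inE (negbTE yx).
apply: le_trans (mst _ (path_tree_spanning un hS)) _.
rewrite mtree_weight_path_tree //; apply: le_trans ws.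
apply: metric_walk_cost_subseq; first exact: sub_edge_rel_path hs.
exact: subseq_trans (undup_subseq _) (filter_subseq _ _).
Qed.

End DoubleTree.

Section BallPacking.
Variables (R : realType) (V : finType) (E : {set {set V}}) (c : {set V} -> R).
Hypothesis E2 : forall e, e \in E -> #|e| = 2%N.
Hypothesis c_ge0 : forall e, e \in E -> 0 <= c e.
Variables (rho : R) (X : {set V}).
Hypothesis rho_ge0 : 0 <= rho.
Hypothesis X_sep : forall u v, u \in X -> v \in X -> u != v -> 2 * rho <= dist E c u v.
Implicit Types (u v y z : V) (H : {set {set V}}).

Local Notation d := (dist E c).

(* Dual-fitting charges of the disjoint open [rho]-balls around the centers in [X]. *)
Definition ball_load v y : R := if connects E v y && (d v y < rho) then rho - d v y else 0.

Definition edge_load v e : R := Num.min (c e) (\sum_(y in e) ball_load v y).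

Definition ball_dist v y : R := Num.min (d v y) rho.

Lemma ball_load_ge0 v y : 0 <= ball_load v y.
Proof. by rewrite /ball_load; case: ifP => // /andP[_]; rewrite subr_ge0 => /ltW. Qed.

Lemma ball_load_eq0 v y : ~~ (0 < ball_load v y) -> ball_load v y = 0.
Proof. by move=> h; apply: le_anti; rewrite ball_load_ge0 andbT leNgt. Qed.

Lemma ball_load_gt0 v y : 0 < ball_load v y ->
  [/\ connects E v y, d v y < rho & ball_load v y = rho - d v y].
Proof. by rewrite /ball_load; case: ifP => [/andP[]|]; last rewrite ltxx. Qed.

Lemma ball_loads_disjoint u v y : u \in X -> v \in X ->
  0 < ball_load u y -> 0 < ball_load v y -> u = v.
Proof.
move=> uX vX /ball_load_gt0[uy du _] /ball_load_gt0[vy dv _].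
apply/eqP/negPn/negP => uv; have := X_sep uX vX uv.
have yv : connects E y v by rewrite connects_sym.
have := dist_triangle c_ge0 uy yv; rewrite (dist_sym c_ge0 y v); lra.
Qed.

Lemma edge_load_ge0 v e : e \in E -> 0 <= edge_load v e.
Proof. by move=> eE; rewrite le_min c_ge0 // sumr_ge0 // => y _; exact: ball_load_ge0. Qed.

Lemma edge_load_le_cost v e : edge_load v e <= c e.
Proof. by rewrite ge_min lexx. Qed.

Lemma edge_load_le_loads v a b : a != b ->
  edge_load v [set a; b] <= ball_load v a + ball_load v b.
Proof. by move=> ab; rewrite ge_min big_setU1 ?inE // big_set1 lexx orbT. Qed.

Lemma sum_ball_load_single (Y : {set V}) v0 y : Y \subset X -> v0 \in Y ->
  0 < ball_load v0 y -> \sum_(v in Y) ball_load v y <= ball_load v0 y.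
Proof.
move=> /fintype.subsetP YX v0Y l0; apply: ler_sum_single => [|v vY vv0]; first exact: ball_load_ge0.
apply: ball_load_eq0; apply: contra vv0 => lv.
by rewrite (ball_loads_disjoint (YX _ vY) (YX _ v0Y) lv l0).
Qed.

(* Distinct centers are [2 rho] apart, so their loads on the two endpoints fit in [d a b]. *)
Lemma ball_loads_edge_le u v a b : u \in X -> v \in X -> u != v -> [set a; b] \in E ->
  0 < ball_load u a -> 0 < ball_load v b -> ball_load u a + ball_load v b <= c [set a; b].
Proof.
move=> uX vX uv abE /ball_load_gt0[ua _ ->] /ball_load_gt0[vb _ ->].
have ab : connects E a b := connects_edge abE.
have bv : connects E b v by rewrite connects_sym.
have := X_sep uX vX uv; have := dist_edge c_ge0 abE; have := dist_triangle c_ge0 ua ab.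
have := dist_triangle c_ge0 (connects_trans ua ab) bv.
by rewrite (dist_sym c_ge0 b v); lra.
Qed.

(* A center loading neither endpoint is charged nothing, a vertex is loaded by at most one
   center, and two distinct centers can only load different endpoints. *)
Lemma edge_load_sum_le (Y : {set V}) e : Y \subset X -> e \in E ->
  \sum_(v in Y) edge_load v e <= c e.
Proof.
move=> YX eE; have /eqP/cards2P[a [b [ab eab]]] := E2 eE; subst e.
have inX v : v \in Y -> v \in X by move/(fintype.subsetP YX).
pose loads v := (0 < ball_load v a) || (0 < ball_load v b).
have idle v : ~~ loads v -> edge_load v [set a; b] = 0.
  rewrite negb_or => /andP[/ball_load_eq0 la /ball_load_eq0 lb].
  apply/le_anti; rewrite edge_load_ge0 // andbT.
  by apply: le_trans (edge_load_le_loads v ab) _; rewrite la lb addr0.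
have [[va [vb [vaY vbY vab la lb]]] | nsplit] :=
  pselect (exists va vb,
    [/\ va \in Y, vb \in Y, va != vb, 0 < ball_load va a & 0 < ball_load vb b]).
  apply: le_trans (ler_sum _ (fun v _ => edge_load_le_loads v ab)) _.
  rewrite big_split /=; apply: le_trans (ball_loads_edge_le (inX _ vaY) (inX _ vbY) vab eE la lb).
  by apply: lerD; apply: sum_ball_load_single.
case: (pickP [pred v in Y | loads v]) => [v0 /andP[v0Y l0] | none]; last first.
  by rewrite big1 ?c_ge0 // => v vY; apply: idle; move: (none v); rewrite /= vY => /negbT.
apply: le_trans (edge_load_le_cost v0 _); apply: ler_sum_single => [|v vY vv0].
  exact: edge_load_ge0.
apply: idle; apply/negP => lv; apply: nsplit.
have disj y : 0 < ball_load v y -> 0 < ball_load v0 y -> False.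
  by move=> h h0; move/eqP: vv0; apply; exact: ball_loads_disjoint (inX _ vY) (inX _ v0Y) h h0.
case/orP: l0 => l0; case/orP: lv => lv; try by case: (disj _ lv l0).
  by exists v0, v; split; rewrite // eq_sym.
by exists v, v0.
Qed.

Lemma ball_dist_edge v a b : connects E v a -> [set a; b] \in E ->
  ball_dist v b - ball_dist v a <= edge_load v [set a; b].
Proof.
move=> va abE; have ab_conn := connects_edge abE.
have vb : connects E v b := connects_trans va ab_conn.
have ab : a != b by apply/eqP => eab; have := E2 abE; rewrite eab finset.setUid cards1.
have := dist_edge c_ge0 abE; have := dist_triangle c_ge0 va ab_conn.
have ba_conn : connects E b a by rewrite connects_sym.
have := dist_triangle c_ge0 vb ba_conn.
have := dist_ge0 c_ge0 v a; have := dist_ge0 c_ge0 v b; rewrite (dist_sym c_ge0 b a).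
rewrite le_min big_setU1 ?inE // big_set1 /ball_dist /ball_load va vb /= !minEle.
by case: (leP (d v b) rho); case: (leP (d v a) rho); case: (ltP (d v a) rho);
  case: (ltP (d v b) rho) => *; apply/andP; split; lra.
Qed.

Lemma ball_dist_path v z p : connects E v z -> path (edge_rel E) z p ->
  ball_dist v (last z p) - ball_dist v z <=
    \sum_(ab <- zip (z :: p) p) edge_load v [set ab.1; ab.2].
Proof.
elim: p z => [|y p IH] z vz /=; first by rewrite subrr big_nil.
case/andP=> zy hp; rewrite big_cons /=.
have := ball_dist_edge vz zy; have := IH y (connects_trans vz (connects_edge zy)) hp; lra.
Qed.

Lemma uniq_path_edges z p : uniq (z :: p) -> uniq [seq [set ab.1; ab.2] | ab <- zip (z :: p) p].
Proof.
elim: p z => [|y p IH] z //; rewrite cons_uniq => /andP[zn un] /=.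
rewrite IH // andbT; apply/mapP => -[[a b] hab /= eq].
have [ha hb _] := mem_zip_behead un hab.
have : z \in [set a; b] by rewrite -eq set21.
by case/set2P => zab; rewrite zab ?ha ?hb in zn.
Qed.

Lemma path_edges_in H z p a b : path (edge_rel H) z p -> (a, b) \in zip (z :: p) p ->
  [set a; b] \in H.
Proof.
elim: p z => [|y p IH] z //= /andP[zy hp]; rewrite inE => /orP[/eqP[-> ->] //|].
exact: IH hp.
Qed.

(* Along a simple [v]-[y] path the potential [ball_dist v] rises from [0] to [rho], and each edge
   is charged at least the increase across it. *)
Lemma edge_load_connector_ge v y H : H \subset E -> connects H v y -> rho <= d v y ->
  rho <= \sum_(e in H) edge_load v e.
Proof.
move=> sH /connectP[p hp ->]; case: (shortenP hp) => p' hp' up' _ far.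
have := ball_dist_path (connects_refl E v) (sub_edge_rel_path sH hp').
have -> : ball_dist v (last v p') = rho.
  by rewrite /ball_dist minEle; case: leP => // h; apply/le_anti; rewrite h far.
rewrite /ball_dist (dist_xx c_ge0) minEle rho_ge0 subr0 => /le_trans; apply.
rewrite -(big_map (fun ab => [set ab.1; ab.2]) predT (edge_load v)).
rewrite (big_uniq _ (uniq_path_edges up')).
apply: ler_sum_subset => [|e eH]; last by rewrite edge_load_ge0 // (fintype.subsetP sH).
by apply/fintype.subsetP => e /mapP[[a b] hab ->]; exact: path_edges_in hp' hab.
Qed.

End BallPacking.

Lemma exists_card_between (T : finType) (A B : {set T}) n : A \subset B ->
  (#|A| <= n <= #|B|)%N -> exists D : {set T}, [/\ A \subset D, D \subset B & #|D| = n].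
Proof.
have [m] := ubnP (n - #|A|)%N; elim: m A => // m IH A hm AB /andP[An nB].
have [<-|neq] := eqVneq #|A| n; first by exists A.
have /fintype.subsetPn[x xB xA] : ~~ (B \subset A).
  by apply/negP => /subset_leq_card; move: neq An nB; clear; lia.
have [|||D [xAD DB cD]] := IH (x |: A); rewrite ?cardsU1 ?xA //.
- by move: hm neq An; clear; lia.
- by rewrite finset.subUset finset.sub1set xB AB.
- by rewrite nB andbT; move: neq An; clear; lia.
by exists D; split => //; apply: fintype.subset_trans xAD; exact: finset.subsetUr.
Qed.

Lemma chunk_ind (T : Type) (k : nat) (P : seq T -> Prop) : (0 < k)%N ->
  (forall t, (size t < k)%N -> P t) ->
  (forall t, (k <= size t)%N -> P (drop k t) -> P t) -> forall t, P t.
Proof.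
move=> k_gt0 base step t; have [n] := ubnP (size t); elim: n t => // n IH t lt.
have [st|kt] := ltnP (size t) k; first exact: base.
by apply: (step _ kt); apply: IH; rewrite size_drop; lia.
Qed.

Lemma divn_size_drop (T : Type) (k : nat) (t : seq T) : (0 < k)%N -> (k <= size t)%N ->
  (size t %/ k = (size (drop k t) %/ k).+1)%N.
Proof.
move=> k_gt0 kt; rewrite size_drop -{1}(subnKC kt) divnDl ?dvdnn // divnn k_gt0.
by rewrite add1n.
Qed.

Section RobustInstance.
Variables (R : realType) (V : finType) (E : {set {set V}}) (c : {set V} -> R).
Hypothesis c_ge0 : forall e, e \in E -> 0 <= c e.
Variables (r : V) (U : {set V}) (k : nat) (E0 : {set {set V}}) (ED : {set V} -> {set {set V}}).
Hypothesis k_gt0 : (0 < k)%N.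
Hypothesis kU : (k <= #|U|)%N.
Hypothesis feas : feasible E r U k E0 ED.
Implicit Types (D : {set V}) (t : seq V).

Local Notation Ts := (second_stage c U k ED).

Lemma first_stage_sub : E0 \subset E.
Proof. by case: feas. Qed.

Lemma second_stage_sub D : D \in scenarios U k -> ED D \subset E.
Proof. by case: feas => _ /[apply] -[]. Qed.

Lemma scenario_connects D v : D \in scenarios U k -> v \in D -> connects (E0 :|: ED D) v r.
Proof. by case: feas => _ /[apply] -[_]; apply. Qed.

Lemma scenario_cost_le D : D \in scenarios U k -> edge_cost c (ED D) <= Ts.
Proof. by move=> hD; rewrite /second_stage (bigD1 D) //= le_max lexx. Qed.

Lemma scenario_superset t : uniq t -> {subset t <= U} -> (size t <= k)%N ->
  exists2 D, D \in scenarios U k & {subset t <= D}.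
Proof.
move=> ut tU st; have cA : #|[set x in t]| = size t by rewrite cardsE; exact/card_uniqP.
have tU' : [set x in t] \subset U by apply/fintype.subsetP => x; rewrite inE => /tU.
have bnd : (#|[set x in t]| <= k <= #|U|)%N by rewrite cA st kU.
have [D [tD DU cD]] := exists_card_between tU' bnd.
exists D => [|x xt]; first by rewrite inE DU cD eqxx.
by apply: (fintype.subsetP tD); rewrite inE.
Qed.

Lemma take_scenario t : uniq t -> {subset t <= U} -> (k <= size t)%N ->
  [set x in take k t] \in scenarios U k.
Proof.
move=> ut tU kt; rewrite inE cardsE (card_uniqP (take_uniq _ ut)) size_takel // eqxx andbT.
by apply/fintype.subsetP => x; rewrite inE => /mem_take /tU.
Qed.

(* Group [t] into scenarios of [k] terminals, each served by its own second-stage edges. *)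
Lemma scenario_cover t : uniq t -> {subset t <= U} -> exists Hc : {set {set V}},
  [/\ Hc \subset E, forall v, v \in t -> connects (E0 :|: Hc) v r &
      edge_cost c Hc <= (size t %/ k)%:R * Ts + Ts].
Proof.
elim/(@chunk_ind V k): t => // [t st|t kt IH] ut tU.
  have [D hD tD] := scenario_superset ut tU (ltnW st).
  exists (ED D); split; [exact: second_stage_sub | | ].
    by move=> v /tD; exact: scenario_connects.
  by rewrite divn_small // mul0r add0r scenario_cost_le.
have hD := take_scenario ut tU kt.
have [|Hc [HcE cHc wHc]] := IH (drop_uniq _ ut); first by move=> x /mem_drop /tU.
exists (ED [set x in take k t] :|: Hc); split.
- by rewrite finset.subUset HcE second_stage_sub.
- move=> v; rewrite -{1}(cat_take_drop k t) mem_cat => /orP[vt|vd].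
    apply: connects_subset (scenario_connects hD _); last by rewrite inE.
    by rewrite finset.setUS // finset.subsetUl.
  by apply: connects_subset (cHc _ vd); rewrite finset.setUS // finset.subsetUr.
- apply: le_trans (ler_sum_setU _) _.
    move=> e; rewrite inE => /orP[] he; apply: c_ge0.
      exact: fintype.subsetP (second_stage_sub hD) _ he.
    exact: fintype.subsetP HcE _ he.
  rewrite (divn_size_drop k_gt0 kt) -addn1 natrD mulrDl mul1r.
  by have := scenario_cost_le hD; move: wHc; rewrite /edge_cost; lra.
Qed.

End RobustInstance.

Section GreedyPacking.
Variables (R : realType) (V : finType) (E : {set {set V}}) (c : {set V} -> R).
Hypothesis E2 : forall e, e \in E -> #|e| = 2%N.
Hypothesis c_ge0 : forall e, e \in E -> 0 <= c e.
Variables (r : V) (U : {set V}) (k : nat) (E0 : {set {set V}}) (ED : {set V} -> {set {set V}}).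
Hypothesis k_gt0 : (0 < k)%N.
Hypothesis kU : (k <= #|U|)%N.
Hypothesis feas : feasible E r U k E0 ED.
Variables (beta T : R) (s : seq V).
Hypothesis T_ge0 : 0 <= T.
Hypothesis beta_ge0 : 0 <= beta.
Hypothesis greedy : greedy_run E c r U k beta T s.

Local Notation d := (dist E c).
Local Notation Ts := (second_stage c U k ED).
Local Notation theta := (beta * T / k%:R).
Local Notation rho := (theta / 2).

Lemma theta_ge0 : 0 <= theta.
Proof. by rewrite divr_ge0 ?ler0n ?mulr_ge0. Qed.

Lemma rho_ge0 : 0 <= rho.
Proof. by rewrite divr_ge0 ?theta_ge0. Qed.

Lemma greedy_far_prefix i j : (i < size s)%N -> (j < i)%N -> theta < d (nth r s i) (nth r s j).
Proof.
move=> si ji; have [_ far] := greedy.1 i si; apply: lt_le_trans far (distS_le c_ge0 _ _).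
by rewrite !inE -(nth_take r ji) mem_nth ?orbT // size_takel // ltnW.
Qed.

Lemma greedy_far_root i : (i < size s)%N -> theta < d (nth r s i) r.
Proof.
move=> si; have [_ far] := greedy.1 i si.
by apply: lt_le_trans far (distS_le c_ge0 _ _); rewrite !inE eqxx.
Qed.

Lemma greedy_uniq : uniq s.
Proof.
apply/(uniqPn r) => -[i [j [ij js eq]]].
by have := greedy_far_prefix js ij; rewrite eq (dist_xx c_ge0) ltNge theta_ge0.
Qed.

Lemma greedy_sub : {subset s <= U}.
Proof.
move=> x xs; have si : (index x s < size s)%N by rewrite index_mem.
by have [] := greedy.1 _ si; rewrite nth_index.
Qed.

Lemma greedy_sep u v : u \in [set x in s] -> v \in [set x in s] -> u != v -> 2 * rho <= d u v.
Proof.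
rewrite !inE => us vs uv; have -> : 2 * rho = theta by rewrite mulrC divfK ?pnatr_eq0.
rewrite -(nth_index r us) -(nth_index r vs); apply: ltW.
have ui : (index u s < size s)%N by rewrite index_mem.
have vi : (index v s < size s)%N by rewrite index_mem.
case: (ltngtP (index u s) (index v s)) => [uv'|vu|eq].
- by rewrite (dist_sym c_ge0); exact: greedy_far_prefix.
- exact: greedy_far_prefix.
- by move: uv; rewrite -(nth_index r us) -(nth_index r vs) eq eqxx.
Qed.

Definition center_charge v : R := \sum_(e in E0) edge_load E c rho v e.

Lemma center_charge_ge0 v : 0 <= center_charge v.
Proof.
apply: sumr_ge0 => e eE0; apply: (edge_load_ge0 c_ge0).
exact: fintype.subsetP (first_stage_sub feas) _ eE0.
Qed.

(* Each of the [k] centers of a scenario gets charge [rho] from its connection to [r], and the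
   second-stage edges can absorb at most [Ts] of the total. *)
Lemma scenario_packing D : D \in scenarios U k -> {subset D <= s} ->
  k%:R * rho - Ts <= \sum_(v in D) center_charge v.
Proof.
move=> hD Ds; have cD : #|D| = k by move: hD; rewrite inE => /andP[_ /eqP].
have sH : E0 :|: ED D \subset E.
  by rewrite finset.subUset (first_stage_sub feas) (second_stage_sub feas hD).
have each v : v \in D -> rho <= center_charge v + \sum_(e in ED D) edge_load E c rho v e.
  move=> vD; apply: le_trans (ler_sum_setU _); last first.
    by move=> e eH; apply: (edge_load_ge0 c_ge0); exact: fintype.subsetP sH _ eH.
  apply: (edge_load_connector_ge E2 c_ge0 rho_ge0 sH (scenario_connects feas hD vD)).
  have si : (index v s < size s)%N by rewrite index_mem Ds.
  have := greedy_far_root si; rewrite nth_index ?Ds // => far.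
  by apply: ltW; apply: le_lt_trans far; rewrite ler_pdivrMr // ler_peMr ?theta_ge0 ?ler1n.
have hs : \sum_(v in D) rho <=
    \sum_(v in D) center_charge v + \sum_(v in D) \sum_(e in ED D) edge_load E c rho v e.
  by rewrite -big_split; apply: ler_sum.
have krho : \sum_(v in D) rho = k%:R * rho by rewrite sumr_const cD mulr_natl.
have DX : D \subset [set x in s] by apply/fintype.subsetP => x /Ds; rewrite inE.
have he : \sum_(v in D) \sum_(e in ED D) edge_load E c rho v e <= edge_cost c (ED D).
  rewrite (exchange_big _ _ (index_enum _)) /=; apply: ler_sum => e eE.
  apply: (edge_load_sum_le E2 c_ge0 greedy_sep DX).
  exact: fintype.subsetP (second_stage_sub feas hD) e eE.
by have := scenario_cost_le c ED hD; rewrite krho in hs; lra.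
Qed.

Lemma chunks_packing t : uniq t -> {subset t <= s} ->
  (size t %/ k)%:R * (k%:R * rho - Ts) <= \sum_(v <- t) center_charge v.
Proof.
elim/(@chunk_ind V k): t => // [t st|t kt IH] ut ts.
  by rewrite divn_small // mul0r sumr_ge0 // => v _; exact: center_charge_ge0.
have hD := take_scenario ut (fun x xt => greedy_sub (ts x xt)) kt.
rewrite -[in leRHS](cat_take_drop k t) big_cat /= (divn_size_drop k_gt0 kt) -natr1.
rewrite mulrDl mul1r addrC; apply: lerD.
  by apply: IH; [exact: drop_uniq | move=> x /mem_drop /ts].
rewrite big_uniq_set ?take_uniq //.
by apply: scenario_packing hD _ => x; rewrite inE => /mem_take /ts.
Qed.

Lemma first_stage_lower_bound : (size s %/ k)%:R * (beta * T / 2 - Ts) <= edge_cost c E0.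
Proof.
have -> : beta * T / 2 = k%:R * rho by field; rewrite pnatr_eq0 -lt0n k_gt0.
apply: le_trans (chunks_packing greedy_uniq (fun x xs => xs)) _.
rewrite big_uniq_set ?greedy_uniq //.
rewrite /center_charge (exchange_big _ _ (index_enum _)) /=; apply: ler_sum => e eE0.
apply: (edge_load_sum_le E2 c_ge0 greedy_sep (fintype.subxx _)).
exact: fintype.subsetP (first_stage_sub feas) _ eE0.
Qed.

Lemma greedy_mst_le F : mst_on E c (greedy_set r s) F ->
  mtree_weight E c F <= 2 * (edge_cost c E0 + ((size s %/ k)%:R * Ts + Ts)).
Proof.
move=> mst; have [Hc [HcE cHc wHc]] := scenario_cover c_ge0 k_gt0 kU feas greedy_uniq greedy_sub.
have sH : E0 :|: Hc \subset E by rewrite finset.subUset (first_stage_sub feas) HcE.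
have conn y : y \in greedy_set r s -> connects (E0 :|: Hc) r y.
  by rewrite !inE => /orP[/eqP -> | ys]; [exact: connects_refl | rewrite connects_sym cHc].
apply: le_trans (mst_le_twice_connector E2 c_ge0 sH _ conn mst) _; first by rewrite !inE eqxx.
rewrite ler_pM2l //; apply: le_trans (ler_sum_setU _) _; last by rewrite lerD2l.
by move=> e /(fintype.subsetP sH); exact: c_ge0.
Qed.

End GreedyPacking.

Lemma robust_ratio_arith (R : realFieldType) (beta T Ts P q M : R) :
  2 < beta -> 0 <= q -> Ts <= T -> q * (beta * T / 2 - Ts) <= P ->
  M <= 2 * (P + (q * Ts + Ts)) -> M <= 2 * beta / (beta - 2) * P + 2 * Ts.
Proof.
move=> beta_gt2 q_ge0 TsT lowP upM; have b2 : 0 < beta - 2 by lra.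
have qTs : q * Ts <= 2 * P / (beta - 2).
  rewrite ler_pdivlMr //.
  have : q * (beta * Ts) <= q * (beta * T) by rewrite ler_wpM2l // ler_wpM2l //; lra.
  lra.
have -> : 2 * beta / (beta - 2) * P = 2 * P + 2 * (2 * P / (beta - 2)).
  by field; rewrite subr_eq0 gt_eqF.
lra.
Qed.

Unset Implicit Arguments.

Theorem mainTheorem17 (R : realType) (V : finType) (E : {set {set V}}) (c : {set V} -> R)
    (r : V) (U : {set V}) (lambda : R) (k : nat) (beta T : R)
    (E0 : {set {set V}}) (ED : {set V} -> {set {set V}}) (s : seq V) (F : {set V * V}) :
  (forall e, e \in E -> #|e| = 2%N) ->
  (forall e, e \in E -> 0 <= c e) ->
  1 <= lambda ->
  (1 <= k)%N -> (k <= #|U|)%N ->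
  0 <= T -> 2 < beta ->
  optimal E c r U lambda k E0 ED ->
  greedy_run E c r U k beta T s ->
  mst_on E c (greedy_set r s) F ->
  second_stage c U k ED <= T ->
  mtree_weight E c F <=
    (2 * beta / (beta - 2)) * edge_cost c E0 + 2 * second_stage c U k ED.
Proof.
move=> E2 c_ge0 _ k_gt0 kU T_ge0 beta_gt2 [feas _] greedy mst sT.
have beta_ge0 : 0 <= beta by lra.
have low := first_stage_lower_bound E2 c_ge0 k_gt0 feas T_ge0 beta_ge0 greedy.
have up := greedy_mst_le E2 c_ge0 k_gt0 kU feas T_ge0 beta_ge0 greedy mst.
exact: robust_ratio_arith beta_gt2 (ler0n _ _) sT low up.
Qed.
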